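(* Let $s\geqslant1$, let $\bar X=X_1,\dots,X_r$ be variables and $\bar f=f_1,\dots,f_r$ elements of the corresponding domains of $\mathcal{B}_s$. (1) Let $m\geqslant1$, let $\varphi(\bar X)$ be a formula of $LP_s$ with all free variables among $\bar X$ and $sort(\varphi)\leqslant m$, and let $\alpha,\beta\in M$ satisfy $\langle\alpha\rangle_i=\langle\beta\rangle_i$ for all $i=0,\dots,m-1$. Then $\alpha\Vdash\varphi(\bar f)$ iff $\beta\Vdash\varphi(\bar f)$. (2) Let $p\geqslant1$, let $\varphi(\mathcal H^p,\bar X)$ be a formula of $LP_s$ with all free variables among $\mathcal H^p,\bar X$, with $sort(\varphi)\leqslant p$, and such that $\varphi$ has no free variables of type $p$ over non-lawlike functionals other than $\mathcal H^p$. Let $\alpha\in M$ and $g,h\in l_p$ with $g(\bar\alpha(p),n)=h(\bar\alpha(p),n)$ for all $n<lh(\alpha)$. Then $\alpha\Vdash\varphi(g,\bar f)$ iff $\alpha\Vdash\varphi(h,\bar f)$.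
   Context: $sort(\varphi)$ is the maximal type of the free variables of $\varphi$ (0 if none); number variables have type 0, and the three kinds of functional variables $F^n,A^n,\mathcal F^n$ have type $n$; ''non-lawlike'' variables of type $n$ are the $F^n$ and $\mathcal F^n$. Language $L_s$ ($s\geqslant1$). Variables: $x,y,z,\dots$ of type 0 (natural numbers); for $1\leqslant n\leqslant s$, variables $F^n,G^n,\dots$ (over $n$-functionals), $A^n,B^n,\dots$ (over lawlike $n$-functionals), $\mathcal{F}^n,\mathcal{G}^n,\dots$ (over lawless $n$-functionals). Constants: $0$ and $K^n$. Terms and $n$-functionals: number variables and $0$ are terms; type-$n$ variables and $K^n$ are $n$-functionals; $St$, $t+\tau$, $t\cdot\tau$ are terms for terms $t,\tau$; $N^n(Z)$ is an $n$-functional for an $n$-functional $Z$; $Z(t)=Ap^1(Z,t)$ is a term for a 1-functional $Z$; $Z(t)=Ap^{n+1}(Z,t)$ is an $n$-functional for an $(n+1)$-functional $Z$. Atomic formulas $t=_0\tau$, $Z=_nV$; formulas built with $\bot,\wedge,\vee,\supset,\forall,\exists$. $LP_s$ adds atomic formulas $\vdash_z\varphi(\bar X)$ for terms $z$ and formulas $\varphi$ of $L_s$ with free variables in $\bar X$. Beth model $\mathcal{B}_s$. A path in a poset is a maximal linearly ordered subset; a path through $x$ is a path containing $x$. $b^{(m)}$: sequences of length $m$ from $b$; $b^*$: finite sequences, with $y\leqslant x$ iff $x$ is an initial segment of $y$. $a_0=\omega$, $d_0=\{\langle x\rangle:x\in\omega^*\}$ with $\langle x\rangle\preccurlyeq_0\langle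 y\rangle$ iff $x\leqslant y$. For $k\geqslant1$: $a_k$ = partial functions $f:d_{k-1}\times\omega\dashrightarrow a_{k-1}$ that are monotonic ($y\preccurlyeq_{k-1}x\Rightarrow f(x,\cdot)\subseteq f(y,\cdot)$) and complete (for each path $S$ in $d_{k-1}$, $\bigcup_{x\in S}f(x,\cdot)$ is total); $d_k=\bigcup_m a_0^{(m)}\times\dots\times a_k^{(m)}$, $x\preccurlyeq_ky$ iff $\langle x\rangle_i\leqslant\langle y\rangle_i$ for all $i\leqslant k$, $lh(x)=m$ on the $m$-th piece. Nodes $M=d_{s-1}$, $\preccurlyeq=\preccurlyeq_{s-1}$, root $\varepsilon=\langle\langle\rangle,\dots,\langle\rangle\rangle$; for $\alpha=\langle\alpha_0,\dots,\alpha_{s-1}\rangle$, $\langle\alpha\rangle_i=\alpha_i$ and $\bar\alpha(k)=\langle\alpha_0,\dots,\alpha_{k-1}\rangle\in d_{k-1}$. Domains: $\omega$; $a_k$; $b_k=\{f\in a_k: f(\text{root of }d_{k-1},\cdot)\text{ total}\}$; $l_k=\{\nu_k(\xi):\xi\in c_k\}$ with $c_k$ the maps $\xi:\omega\times a_{k-1}\to a_{k-1}$ with each $\xi(n,\cdot)$ bijective and $\nu_k(\xi)(x,n)=\xi(n,\langle\langle x\rangle_{k-1}\rangle_n)$ for $n<lh(x)$, undefined otherwise. Interpretations: $\widehat K^1(x,n)=0$, $\widehat K^{k+1}(x,n)=\widehat K^k$; usual $0,S,+,\cdot$; $N^k\mapsto S^k$ with $S^0(x)=x+1$, $S^{n+1}(f)=S^n\circ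 f$; at node $\alpha$, $Ap^k(f,n)\mapsto f(\bar\alpha(k),n)$; $Z^{[\alpha]}$ is the (possibly undefined) value at $\alpha$ of an evaluated term/functional. $Val(\alpha,Z=_kV)=T$ iff $Z^{[\alpha]},V^{[\alpha]}$ defined and equal; $Val(\alpha,\vdash_t\varphi)=T$ iff $t^{[\alpha]}$ defined and some $\gamma$ with $\alpha\preccurlyeq\gamma$, $lh(\gamma)=t^{[\alpha]}$ has $\gamma\Vdash\varphi$. Forcing (Beth): atomic $\varphi$: every path through $\alpha$ meets $\beta$ with $Val(\beta,\varphi)=T$; $\alpha\not\Vdash\bot$; $\wedge$ componentwise; $\vee$: every path through $\alpha$ meets $\beta$ forcing a disjunct; $\psi\supset\eta$: every $\beta\preccurlyeq\alpha$ forcing $\psi$ forces $\eta$; $\forall X\psi$: $\alpha\Vdash\psi(c)$ for all $c$ in the domain; $\exists X\psi$: every path through $\alpha$ meets $\beta$ with $\beta\Vdash\psi(c)$ for some $c$. $\mathcal B_s\Vdash\varphi$ means $\varepsilon\Vdash\varphi$. *)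

From Stdlib Require Import List Arith PeanoNat Classical.
Import ListNotations.

Record Lev := {
  LA : Type;
  LD : Type;
  Llh : LD -> nat;
  Lle : LD -> LD -> Prop;          (* Lle x y  <->  x ≼ y  (x extends y) *)
  Lroot : LD;
  Lroot_lh : Llh Lroot = 0;
  Lle_refl : forall x, Lle x x;
  Llast : LD -> list LA
}.

Definition seq_le {T : Type} (y x : list T) : Prop := exists z, y = x ++ z.

Definition is_chain (L : Lev) (S : LD L -> Prop) : Prop :=
  forall x y, S x -> S y -> Lle L x y \/ Lle L y x.

Definition is_path (L : Lev) (S : LD L -> Prop) : Prop :=
  is_chain L S /\
  forall T, is_chain L T -> (forall x, S x -> T x) -> forall x, T x -> S x.

Definition mono (L : Lev) (f : LD L -> nat -> option (LA L)) : Prop :=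
  forall x y, Lle L y x -> forall n v, f x n = Some v -> f y n = Some v.

Definition complete (L : Lev) (f : LD L -> nat -> option (LA L)) : Prop :=
  forall S, is_path L S -> forall n, exists x, S x /\ f x n <> None.

Definition Afun (L : Lev) : Type :=
  { f : LD L -> nat -> option (LA L) | mono L f /\ complete L f }.

Definition Dnext (L : Lev) : Type :=
  { p : LD L * list (Afun L) | length (snd p) = Llh L (fst p) }.

Definition Dnext_root (L : Lev) : Dnext L :=
  exist _ (Lroot L, []) (eq_sym (Lroot_lh L)).

Definition Dnext_le (L : Lev) (x y : Dnext L) : Prop :=
  Lle L (fst (proj1_sig x)) (fst (proj1_sig y)) /\
  seq_le (snd (proj1_sig x)) (snd (proj1_sig y)).

Lemma Dnext_le_refl (L : Lev) : forall x, Dnext_le L x x.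
Proof.
  intro x; split; [apply Lle_refl | exists []; now rewrite app_nil_r].
Qed.

Definition lev0 : Lev := {|
  LA := nat; LD := list nat; Llh := @length nat;
  Lle := fun x y => seq_le x y;
  Lroot := []; Lroot_lh := eq_refl;
  Lle_refl := fun x => ex_intro _ [] (eq_sym (app_nil_r x));
  Llast := fun x => x |}.

Definition levS (L : Lev) : Lev := {|
  LA := Afun L; LD := Dnext L;
  Llh := fun x => Llh L (fst (proj1_sig x));
  Lle := Dnext_le L;
  Lroot := Dnext_root L; Lroot_lh := Lroot_lh L;
  Lle_refl := Dnext_le_refl L;
  Llast := fun x => snd (proj1_sig x) |}.

Fixpoint lev (k : nat) : Lev :=
  match k with 0 => lev0 | S k' => levS (lev k') end.

Definition A (k : nat) : Type := LA (lev k).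
Definition D (k : nat) : Type := LD (lev k).
Definition lh {k : nat} (x : D k) : nat := Llh (lev k) x.
Definition nle {k : nat} (x y : D k) : Prop := Lle (lev k) x y.
Definition root (k : nat) : D k := Lroot (lev k).

Definition apf {k : nat} (f : A (S k)) : D k -> nat -> option (A k) :=
  proj1_sig (f : Afun (lev k)).

(* tr i x j : the truncation <x_0,...,x_j> of x ∈ d_i, when j <= i *)
Fixpoint tr (i : nat) : D i -> forall j, option (D j) :=
  match i return D i -> forall j, option (D j) with
  | 0 => fun x j =>
      match Nat.eq_dec 0 j with
      | left e => Some (eq_rect 0 D x j e)
      | right _ => None
      end
  | S i' => fun x j =>
      match Nat.eq_dec (S i') j with
      | left e => Some (eq_rect (S i') D x j e)
      | right _ => tr i' (fst (proj1_sig (x : Dnext (lev i')))) j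
      end
  end.

Definition trd (i : nat) (x : D i) (j : nat) : D j :=
  match tr i x j with Some y => y | None => root j end.

(* \bar\alpha(k) ∈ d_{k-1} for a node α ∈ M = d_{s-1} (1 <= k <= s) *)
Definition bar (s : nat) (alpha : D (s - 1)) (k : nat) : D (Nat.pred k) :=
  trd (s - 1) alpha (Nat.pred k).

(* comp i x j = <x>_j for x ∈ d_i (empty list if j > i) *)
Fixpoint comp (i : nat) : D i -> forall j, list (A j) :=
  match i return D i -> forall j, list (A j) with
  | 0 => fun x j =>
      match Nat.eq_dec 0 j with
      | left e => eq_rect 0 (fun j => list (A j)) x j e
      | right _ => []
      end
  | S i' => fun x j =>
      match Nat.eq_dec (S i') j with
      | left e => eq_rect (S i') (fun j => list (A j))
                    (snd (proj1_sig (x : Dnext (lev i')))) j e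
      | right _ => comp i' (fst (proj1_sig (x : Dnext (lev i')))) j
      end
  end.

Lemma path_nonempty (L : Lev) S : is_path L S -> exists x, S x.
Proof.
  intros [Hc Hm]. apply NNPP; intro Hn.
  assert (Hr : S (Lroot L)).
  { apply (Hm (fun y => y = Lroot L)).
    - intros x y -> ->; left; apply Lle_refl.
    - intros x Hx; exfalso; apply Hn; eauto.
    - reflexivity. }
  apply Hn; eauto.
Qed.

Lemma mono_const (L : Lev) (c : LA L) : mono L (fun _ _ => Some c).
Proof. intros x y _ n v H; exact H. Qed.

Lemma complete_const (L : Lev) (c : LA L) : complete L (fun _ _ => Some c).
Proof.
  intros S HS n. destruct (path_nonempty L S HS) as [x Hx].
  exists x; split; [exact Hx | discriminate].
Qed.

Lemma mono_map (L : Lev) (g : LA L -> LA L) f :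
  mono L f -> mono L (fun x n => option_map g (f x n)).
Proof.
  intros Hf x y Hyx n v H. destruct (f x n) as [w|] eqn:E; [|discriminate].
  rewrite (Hf x y Hyx n w E). exact H.
Qed.

Lemma complete_map (L : Lev) (g : LA L -> LA L) f :
  complete L f -> complete L (fun x n => option_map g (f x n)).
Proof.
  intros Hf S HS n. destruct (Hf S HS n) as [x [Hx Hn]].
  exists x; split; [exact Hx|]. destruct (f x n); [discriminate | contradiction].
Qed.

Fixpoint Kc (n : nat) : A n :=
  match n return A n with
  | 0 => 0
  | S n' => exist (fun f => mono (lev n') f /\ complete (lev n') f)
              (fun _ _ => Some (Kc n'))
              (conj (mono_const (lev n') (Kc n')) (complete_const (lev n') (Kc n')))
  end.

Fixpoint Sc (n : nat) : A n -> A n :=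
  match n return A n -> A n with
  | 0 => fun x => S x
  | S n' => fun f =>
      let f0 := (f : Afun (lev n')) in
      exist (fun f => mono (lev n') f /\ complete (lev n') f)
        (fun x m => option_map (Sc n') (proj1_sig f0 x m))
        (conj (mono_map (lev n') (Sc n') _ (proj1 (proj2_sig f0)))
              (complete_map (lev n') (Sc n') _ (proj2 (proj2_sig f0))))
  end.

Definition lawlike (k : nat) : A k -> Prop :=
  match k return A k -> Prop with
  | 0 => fun _ => True
  | S k' => fun f => forall n, apf f (root k') n <> None
  end.

Definition bijective {T : Type} (g : T -> T) : Prop :=
  (forall a b, g a = g b -> a = b) /\ (forall b, exists a, g a = b).

(* f = nu_k(xi) for some xi ∈ c_k *)
Definition lawless (k : nat) : A k -> Prop :=
  match k return A k -> Prop with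
  | 0 => fun _ => True
  | S k' => fun f =>
      exists xi : nat -> A k' -> A k',
        (forall n, bijective (xi n)) /\
        forall (x : D k') n,
          apf f x n =
            (if n <? lh x then option_map (xi n) (nth_error (Llast (lev k') x) n)
             else None)
  end.

(* kinds of variables: F^n (general), A^n (lawlike), \mathcal F^n (lawless);
   number variables are encoded as type-0 variables of kind Gen *)
Inductive vkind := Gen | Law | Lless.

Definition vkind_eq_dec (a b : vkind) : {a = b} + {a <> b}.
Proof. decide equality. Defined.

(* fn n : n-functionals; fn 0 : terms.
   K 0 is the constant 0, N 0 is the successor S. *)
Inductive fn : nat -> Type :=
  | Var (n : nat) (k : vkind) (i : nat) : fn n
  | K (n : nat) : fn n
  | N (n : nat) : fn n -> fn n
  | Ap (n : nat) : fn (S n) -> fn 0 -> fn n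
  | Plus : fn 0 -> fn 0 -> fn 0
  | Mul : fn 0 -> fn 0 -> fn 0.

Inductive form : Type :=
  | FEq (n : nat) (Z V : fn n) : form
  | FProv (z : fn 0) (phi : form) : form
  | FBot : form
  | FAnd : form -> form -> form
  | FOr : form -> form -> form
  | FImp : form -> form -> form
  | FAll (n : nat) (k : vkind) (i : nat) : form -> form
  | FEx (n : nat) (k : vkind) (i : nat) : form -> form.

Definition var_ok (s n : nat) (k : vkind) : Prop :=
  n <= s /\ (n = 0 -> k = Gen).

Fixpoint wf_fn (s : nat) {n : nat} (Z : fn n) : Prop :=
  match Z with
  | Var n k _ => var_ok s n k
  | K n => n <= s
  | N n Z => n <= s /\ wf_fn s Z
  | Ap n Z t => S n <= s /\ wf_fn s Z /\ wf_fn s t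
  | Plus a b => wf_fn s a /\ wf_fn s b
  | Mul a b => wf_fn s a /\ wf_fn s b
  end.

Fixpoint Ls_form (s : nat) (phi : form) : Prop :=
  match phi with
  | FEq n Z V => n <= s /\ wf_fn s Z /\ wf_fn s V
  | FProv _ _ => False
  | FBot => True
  | FAnd a b | FOr a b | FImp a b => Ls_form s a /\ Ls_form s b
  | FAll n k _ a | FEx n k _ a => var_ok s n k /\ Ls_form s a
  end.

Fixpoint LPs_form (s : nat) (phi : form) : Prop :=
  match phi with
  | FEq n Z V => n <= s /\ wf_fn s Z /\ wf_fn s V
  | FProv z psi => wf_fn s z /\ Ls_form s psi
  | FBot => True
  | FAnd a b | FOr a b | FImp a b => LPs_form s a /\ LPs_form s b
  | FAll n k _ a | FEx n k _ a => var_ok s n k /\ LPs_form s a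
  end.

(* free variables; a variable is (type, kind, index) *)
Definition var := (nat * vkind * nat)%type.

Definition var_eq_dec (a b : var) : {a = b} + {a <> b}.
Proof. decide equality; try apply Nat.eq_dec. decide equality; [apply vkind_eq_dec | apply Nat.eq_dec]. Defined.

Definition vtype (v : var) : nat := fst (fst v).

Fixpoint fv_fn {n : nat} (Z : fn n) : list var :=
  match Z with
  | Var n k i => [(n, k, i)]
  | K _ => []
  | N _ Z => fv_fn Z
  | Ap _ Z t => fv_fn Z ++ fv_fn t
  | Plus a b | Mul a b => fv_fn a ++ fv_fn b
  end.

Fixpoint fv (phi : form) : list var :=
  match phi with
  | FEq _ Z V => fv_fn Z ++ fv_fn V
  | FProv z psi => fv_fn z ++ fv psi
  | FBot => []
  | FAnd a b | FOr a b | FImp a b => fv a ++ fv b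
  | FAll n k i a | FEx n k i a => remove var_eq_dec (n, k, i) (fv a)
  end.

Definition sort (phi : form) : nat := fold_right max 0 (map vtype (fv phi)).

Definition env : Type := forall n, vkind -> nat -> A n.

Definition upd (rho : env) (n : nat) (k : vkind) (i : nat) (v : A n) : env :=
  fun n' k' i' =>
    match Nat.eq_dec n n' with
    | left e =>
        if vkind_eq_dec k k' then
          if Nat.eq_dec i i' then eq_rect n A v n' e else rho n' k' i'
        else rho n' k' i'
    | right _ => rho n' k' i'
    end.

Definition dom (n : nat) (k : vkind) (v : A n) : Prop :=
  match k with
  | Gen => True
  | Law => lawlike n v
  | Lless => lawless n v
  end.

Definition good_env (rho : env) : Prop := forall n k i, dom n k (rho n k i).

Fixpoint ev (s : nat) (rho : env) (alpha : D (s - 1)) {n : nat} (Z : fn n)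
  : option (A n) :=
  match Z in fn n return option (A n) with
  | Var n k i => Some (rho n k i)
  | K n => Some (Kc n)
  | N n Z => option_map (Sc n) (ev s rho alpha Z)
  | Ap n Z t =>
      match ev s rho alpha Z, ev s rho alpha t with
      | Some f, Some m => apf f (bar s alpha (S n)) m
      | _, _ => None
      end
  | Plus a b =>
      match ev s rho alpha a, ev s rho alpha b with
      | Some x, Some y => Some (x + y)
      | _, _ => None
      end
  | Mul a b =>
      match ev s rho alpha a, ev s rho alpha b with
      | Some x, Some y => Some (x * y)
      | _, _ => None
      end
  end.

Definition M (s : nat) : Type := D (s - 1).

Definition mpath (s : nat) (S : M s -> Prop) : Prop := is_path (lev (s - 1)) S.

Definition bar_cover (s : nat) (alpha : M s) (P : M s -> Prop) : Prop :=
  forall S, mpath s S -> S alpha -> exists beta, S beta /\ P beta.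

Fixpoint forces (s : nat) (phi : form) : env -> M s -> Prop :=
  match phi with
  | FEq n Z V => fun rho alpha =>
      bar_cover s alpha (fun beta =>
        exists v, ev s rho beta Z = Some v /\ ev s rho beta V = Some v)
  | FProv z psi => fun rho alpha =>
      bar_cover s alpha (fun beta =>
        exists t, ev s rho beta z = Some t /\
          exists gamma : M s, nle beta gamma /\ lh gamma = t /\ forces s psi rho gamma)
  | FBot => fun _ _ => False
  | FAnd a b => fun rho alpha => forces s a rho alpha /\ forces s b rho alpha
  | FOr a b => fun rho alpha =>
      bar_cover s alpha (fun beta => forces s a rho beta \/ forces s b rho beta)
  | FImp a b => fun rho alpha =>
      forall beta : M s, nle beta alpha -> forces s a rho beta -> forces s b rho beta
  | FAll n k i a => fun rho alpha =>
      forall c : A n, dom n k c -> forces s a (upd rho n k i c) alpha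
  | FEx n k i a => fun rho alpha =>
      bar_cover s alpha (fun beta =>
        exists c : A n, dom n k c /\ forces s a (upd rho n k i c) beta)
  end.

From Stdlib Require Import List PeanoNat Lia ClassicalEpsilon
  ProofIrrelevance FunctionalExtensionality Eqdep_dec.
Import ListNotations.

(* Both parts are instances of the invariance of forcing under automorphisms
   of B_s.  A family of bijections r_j(n) of a_j (one for each level j and
   position n) relabels every node of every d_j entrywise; this preserves
   order, length and the root, hence paths, monotonicity and completeness, so
   a functional f in a_{j+1} is transported to T f := T o f o T^{-1} (the
   relabelling on d_j inside, the action on a_j outside).  Forcing is
   invariant: alpha ||- phi[rho] iff T alpha ||- phi[T rho].  If r_j is the
   identity for all j < n, then T fixes every n-functional.
   For (1), let r_j(n) swap <alpha>_j(n) and <beta>_j(n): it is the identity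
   below m, so it fixes the interpretation of phi, and it sends alpha to beta.
   For (2), with g = nu(xi_g) and h = nu(xi_h), take r_{p-1}(n) =
   xi_h(n)^{-1} o xi_g(n) and the identity elsewhere: then T g = h, T fixes
   lawlike p-functionals (their values are already decided at the root) and
   all functionals of lower type, and T fixes alpha precisely because g and h
   agree at bar(alpha)(p) below lh(alpha). *)

Lemma sig_ext {T} {P : T -> Prop} (x y : sig P) : proj1_sig x = proj1_sig y -> x = y.
Proof. apply eq_sig_hprop; intros; apply proof_irrelevance. Qed.

Lemma option_map_None {T U} (f : T -> U) o : option_map f o = None <-> o = None.
Proof. destruct o; simpl; split; congruence. Qed.

Lemma option_map_map {T U V} (f : U -> V) (g : T -> U) o :
  option_map f (option_map g o) = option_map (fun x => f (g x)) o.
Proof. destruct o; reflexivity. Qed.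

Definition bij_inv {T} (f : T -> T) (Hf : bijective f) (b : T) : T :=
  proj1_sig (constructive_indefinite_description _ (proj2 Hf b)).

Lemma bij_invK {T} (f : T -> T) (Hf : bijective f) b : f (bij_inv f Hf b) = b.
Proof. exact (proj2_sig (constructive_indefinite_description _ (proj2 Hf b))). Qed.

Lemma bijK {T} (f : T -> T) (Hf : bijective f) a : bij_inv f Hf (f a) = a.
Proof. apply (proj1 Hf). apply bij_invK. Qed.

Definition swap {T} (a b x : T) : T :=
  if excluded_middle_informative (x = a) then b
  else if excluded_middle_informative (x = b) then a else x.

Lemma swapK {T} (a b x : T) : swap a b (swap a b x) = x.
Proof.
  unfold swap.
  repeat (destruct excluded_middle_informative; simpl); congruence.
Qed.

Lemma swap_id {T} (a x : T) : swap a a x = x.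
Proof. unfold swap. repeat destruct excluded_middle_informative; congruence. Qed.

Lemma swap_left {T} (a b : T) : swap a b a = b.
Proof. unfold swap. destruct excluded_middle_informative; congruence. Qed.

Fixpoint imap {T} (f : nat -> T -> T) (i : nat) (l : list T) : list T :=
  match l with [] => [] | a :: l' => f i a :: imap f (S i) l' end.

Lemma imap_length T f i (l : list T) : length (imap f i l) = length l.
Proof. revert i; induction l; simpl; auto. Qed.

Lemma imap_app T f i (x z : list T) :
  imap f i (x ++ z) = imap f i x ++ imap f (i + length x) z.
Proof.
  revert i; induction x; intro i; simpl; [now rewrite Nat.add_0_r|].
  now rewrite IHx, Nat.add_succ_r.
Qed.

Lemma nth_error_imap T f i (l : list T) n :
  nth_error (imap f i l) n = option_map (f (i + n)) (nth_error l n).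
Proof.
  revert i n; induction l; intros i [|n]; simpl; auto; [now rewrite Nat.add_0_r|].
  now rewrite IHl, Nat.add_succ_r.
Qed.

Lemma imapK T (f g : nat -> T -> T) : (forall i x, g i (f i x) = x) ->
  forall i l, imap g i (imap f i l) = l.
Proof. intros H i l; revert i; induction l; intro i; simpl; f_equal; auto. Qed.

Lemma imap_id T (f : nat -> T -> T) : (forall i x, f i x = x) ->
  forall i l, imap f i l = l.
Proof. intros H i l; revert i; induction l; intro i; simpl; f_equal; auto. Qed.

Lemma seq_le_imap T (f g : nat -> T -> T) : (forall i x, g i (f i x) = x) ->
  forall l1 l2 : list T, seq_le (imap f 0 l1) (imap f 0 l2) <-> seq_le l1 l2.
Proof.
  intros H l1 l2; split.
  - intros [z Hz]. exists (imap g (length l2) z).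
    rewrite <- (imapK T f g H 0 l1), Hz, imap_app, imap_length, imapK; auto.
  - intros [z ->]. exists (imap f (length l2) z). apply imap_app.
Qed.

Lemma tr_some i (x : D i) j : j <= i ->
  exists y, tr i x j = Some y /\ lh y = lh x /\ Llast (lev j) y = comp i x j.
Proof.
  revert x j; induction i; intros x j Hj.
  - assert (j = 0) by lia; subst. cbn -[Nat.eq_dec].
    destruct (Nat.eq_dec 0 0) as [e|e]; [|contradiction].
    rewrite (UIP_refl_nat _ e). exists x. auto.
  - cbn -[Nat.eq_dec]. destruct (Nat.eq_dec (S i) j) as [e|e].
    + subst. exists x. auto.
    + apply IHi. lia.
Qed.

Lemma Llast_length j (y : D j) : length (Llast (lev j) y) = lh y.
Proof. destruct j; [reflexivity|]. destruct y as [[y l] pf]. exact pf. Qed.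

Lemma comp_length i (x : D i) j : j <= i -> length (comp i x j) = lh x.
Proof.
  intro H. destruct (tr_some i x j H) as [y [_ [H1 H2]]].
  rewrite <- H2, <- H1. apply Llast_length.
Qed.

Lemma node_ext i (x y : D i) : (forall j, j <= i -> comp i x j = comp i y j) -> x = y.
Proof.
  revert x y; induction i; intros x y H.
  - specialize (H 0 (le_n 0)). cbn -[Nat.eq_dec] in H.
    destruct (Nat.eq_dec 0 0) as [e|e]; [|contradiction].
    rewrite (UIP_refl_nat _ e) in H. exact H.
  - destruct x as [[x1 l1] p1], y as [[x2 l2] p2]. apply sig_ext. simpl. f_equal.
    + apply IHi. intros j Hj. specialize (H j (le_S _ _ Hj)). cbn -[Nat.eq_dec] in H.
      destruct (Nat.eq_dec (S i) j); [lia|]. exact H.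
    + specialize (H (S i) (le_n _)). cbn -[Nat.eq_dec] in H.
      destruct (Nat.eq_dec (S i) (S i)) as [e|e]; [|contradiction].
      rewrite (UIP_refl_nat _ e) in H. exact H.
Qed.

Lemma nle_root k (x : D k) : nle x (root k).
Proof.
  induction k.
  - exists x; reflexivity.
  - destruct x as [[y l] pf]. split; [apply IHk | exists l; reflexivity].
Qed.

Lemma upd_same rho n k i c : upd rho n k i c n k i = c.
Proof.
  unfold upd. destruct (Nat.eq_dec n n) as [e|e]; [|contradiction].
  rewrite (UIP_refl_nat _ e). destruct (vkind_eq_dec k k); [|contradiction].
  destruct (Nat.eq_dec i i); [reflexivity|contradiction].
Qed.

Lemma upd_other rho n k i c n' k' i' : (n', k', i') <> (n, k, i) ->
  upd rho n k i c n' k' i' = rho n' k' i'.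
Proof.
  intro H. unfold upd. destruct (Nat.eq_dec n n') as [e|e]; [destruct e|]; auto.
  destruct (vkind_eq_dec k k'); auto. destruct (Nat.eq_dec i i'); auto.
  subst; contradiction.
Qed.

Lemma vtype_le_sort phi v : In v (fv phi) -> vtype v <= sort phi.
Proof.
  unfold sort. induction (fv phi); simpl; [tauto|].
  intros [->|H]; [lia|]. specialize (IHl H). lia.
Qed.

Lemma ev_agree s (rho1 rho2 : env) alpha n (Z : fn n) :
  (forall n k i, In (n, k, i) (fv_fn Z) -> rho1 n k i = rho2 n k i) ->
  ev s rho1 alpha Z = ev s rho2 alpha Z.
Proof.
  induction Z; intro H; simpl in *; [rewrite H; auto | reflexivity | rewrite IHZ; auto | | |].
  all: rewrite IHZ1, IHZ2; [reflexivity| |]; intros; apply H, in_or_app; auto.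
Qed.

Lemma bar_cover_ext s alpha (P Q : M s -> Prop) :
  (forall b, P b <-> Q b) -> (bar_cover s alpha P <-> bar_cover s alpha Q).
Proof.
  intro H; unfold bar_cover; split; intros H1 S HS Ha;
  destruct (H1 S HS Ha) as [b [Hb Pb]]; exists b; split; auto; apply H; auto.
Qed.

Lemma upd_agree_remove (rho1 rho2 : env) n k i phi c :
  (forall n' k' i', In (n', k', i') (remove var_eq_dec (n, k, i) (fv phi)) ->
     rho1 n' k' i' = rho2 n' k' i') ->
  forall n' k' i', In (n', k', i') (fv phi) ->
    upd rho1 n k i c n' k' i' = upd rho2 n k i c n' k' i'.
Proof.
  intros H n' k' i' Hin.
  destruct (var_eq_dec (n', k', i') (n, k, i)) as [E|E].
  - injection E; intros -> -> ->. now rewrite !upd_same.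
  - rewrite !upd_other by exact E. apply H, in_in_remove; auto.
Qed.

Lemma forces_agree s phi : forall (rho1 rho2 : env) alpha,
  (forall n k i, In (n, k, i) (fv phi) -> rho1 n k i = rho2 n k i) ->
  (forces s phi rho1 alpha <-> forces s phi rho2 alpha).
Proof.
  induction phi; intros rho1 rho2 alpha H; simpl in *;
    try (pose proof (fun n k i Hi => H n k i (in_or_app _ _ _ (or_introl Hi))) as H1;
         pose proof (fun n k i Hi => H n k i (in_or_app _ _ _ (or_intror Hi))) as H2).
  - apply bar_cover_ext; intro b.
    rewrite (ev_agree s rho1 rho2 b _ Z H1), (ev_agree s rho1 rho2 b _ V H2). tauto.
  - apply bar_cover_ext; intro b. rewrite (ev_agree s rho1 rho2 b _ z H1).
    split; intros [t [Ht [g [G1 [G2 G3]]]]]; exists t; split; auto;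
      exists g; repeat split; auto; apply (IHphi _ _ g H2); auto.
  - tauto.
  - rewrite (IHphi1 rho1 rho2 _ H1), (IHphi2 rho1 rho2 _ H2). tauto.
  - apply bar_cover_ext; intro b.
    rewrite (IHphi1 rho1 rho2 _ H1), (IHphi2 rho1 rho2 _ H2). tauto.
  - split; intros G b Hb; specialize (G b Hb);
      rewrite (IHphi1 rho1 rho2 b H1), (IHphi2 rho1 rho2 b H2) in *; auto.
  - split; intros G c Hc; specialize (G c Hc);
      apply (IHphi _ _ alpha (upd_agree_remove _ _ _ _ _ _ c H)); auto.
  - apply bar_cover_ext; intro b.
    split; intros [c [Hc G]]; exists c; split; auto;
      apply (IHphi _ _ b (upd_agree_remove _ _ _ _ _ _ c H)); auto.
Qed.

(** * Automorphisms of the levels *)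

Section Relabel.
Variable L : Lev.
Variables (u w : LD L -> LD L).
Hypothesis wu : forall x, w (u x) = x.
Hypothesis uw : forall x, u (w x) = x.
Hypothesis u_le : forall x y, Lle L x y <-> Lle L (u x) (u y).

Lemma is_path_relabel S : is_path L S -> is_path L (fun z => S (u z)).
Proof.
  intros [Hc Hm]. split.
  - intros x y Hx Hy. destruct (Hc _ _ Hx Hy); [left|right]; apply u_le; auto.
  - intros T HT Hsub x Hx.
    assert (HT' : is_chain L (fun y => T (w y))).
    { intros a b Ha Hb. destruct (HT _ _ Ha Hb) as [H|H]; [left|right];
        apply u_le in H; rewrite !uw in H; auto. }
    apply (Hm _ HT'); [|now rewrite wu].
    intros y Hy. apply Hsub. now rewrite uw.
Qed.

Definition conj_fun (t : LA L -> LA L) (f : LD L -> nat -> option (LA L)) :=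
  fun x n => option_map t (f (w x) n).

Lemma mono_conj_fun t f : mono L f -> mono L (conj_fun t f).
Proof.
  intros Hf x y Hyx n v H. unfold conj_fun in *.
  destruct (f (w x) n) eqn:E; [|discriminate].
  assert (Hl : Lle L (w y) (w x)) by (apply u_le; rewrite !uw; auto).
  rewrite (Hf _ _ Hl n _ E). exact H.
Qed.

Lemma complete_conj_fun t f : complete L f -> complete L (conj_fun t f).
Proof.
  intros Hf S HS n. destruct (Hf _ (is_path_relabel S HS) n) as [z [Hz Hn]].
  exists (u z). split; auto. unfold conj_fun. rewrite wu.
  destruct (f z n); [discriminate|contradiction].
Qed.
End Relabel.

Record LevAut (L : Lev) := {
  nmap : LD L -> LD L; ninv : LD L -> LD L;
  ninvK : forall x, ninv (nmap x) = x; nmapK : forall x, nmap (ninv x) = x;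
  nmap_le : forall x y, Lle L x y <-> Lle L (nmap x) (nmap y);
  nmap_lh : forall x, Llh L (nmap x) = Llh L x;
  nmap_root : nmap (Lroot L) = Lroot L;
  vmap : LA L -> LA L; vinv : LA L -> LA L;
  vinvK : forall x, vinv (vmap x) = x; vmapK : forall x, vmap (vinv x) = x }.
Arguments nmap {L}. Arguments ninv {L}. Arguments ninvK {L}. Arguments nmapK {L}.
Arguments nmap_le {L}. Arguments nmap_lh {L}. Arguments nmap_root {L}.
Arguments vmap {L}. Arguments vinv {L}. Arguments vinvK {L}. Arguments vmapK {L}.

Lemma ninv_le {L} (a : LevAut L) x y : Lle L x y <-> Lle L (ninv a x) (ninv a y).
Proof. rewrite (nmap_le a (ninv a x) (ninv a y)), !nmapK. tauto. Qed.

Lemma ninv_lh {L} (a : LevAut L) x : Llh L (ninv a x) = Llh L x.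
Proof. rewrite <- (nmap_lh a), nmapK. auto. Qed.

Lemma ninv_root {L} (a : LevAut L) : ninv a (Lroot L) = Lroot L.
Proof. rewrite <- (nmap_root a) at 1. apply ninvK. Qed.

Definition base_aut (r ri : nat -> nat -> nat) (Hri : forall i x, ri i (r i x) = x)
  (Hr : forall i x, r i (ri i x) = x) : LevAut lev0.
Proof.
  refine (@Build_LevAut lev0 (imap r 0) (imap ri 0) _ _ _ _ _
            (fun x => x) (fun x => x) _ _); try reflexivity.
  - intros; apply imapK; auto.
  - intros; apply imapK; auto.
  - intros x y; cbn. rewrite (seq_le_imap _ r ri); tauto.
  - intros; apply imap_length.
Defined.

Section LiftAut.
Variable L : Lev.
Variable a : LevAut L.
Variables r ri : nat -> Afun L -> Afun L.
Hypothesis Hri : forall i x, ri i (r i x) = x.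
Hypothesis Hr : forall i x, r i (ri i x) = x.

Definition vmapS (f : Afun L) : Afun L :=
  exist _ (conj_fun L (ninv a) (vmap a) (proj1_sig f))
    (conj (mono_conj_fun L (nmap a) (ninv a) (nmapK a) (nmap_le a) _ _ (proj1 (proj2_sig f)))
          (complete_conj_fun L (nmap a) (ninv a) (ninvK a) (nmapK a) (nmap_le a) _ _
             (proj2 (proj2_sig f)))).

Definition vinvS (f : Afun L) : Afun L :=
  exist _ (conj_fun L (nmap a) (vinv a) (proj1_sig f))
    (conj (mono_conj_fun L (ninv a) (nmap a) (ninvK a) (ninv_le a) _ _ (proj1 (proj2_sig f)))
          (complete_conj_fun L (ninv a) (nmap a) (nmapK a) (ninvK a) (ninv_le a) _ _
             (proj2 (proj2_sig f)))).

Lemma relabel_node_length (u : LD L -> LD L) (Hu : forall x, Llh L (u x) = Llh L x)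
  (q : nat -> Afun L -> Afun L) y (l : list (Afun L)) :
  length l = Llh L y -> length (imap q 0 l) = Llh L (u y).
Proof. rewrite imap_length, Hu; auto. Qed.

Definition relabel_node (u : LD L -> LD L) (Hu : forall x, Llh L (u x) = Llh L x)
  (q : nat -> Afun L -> Afun L) (x : Dnext L) : Dnext L :=
  match x with
  | exist _ (y, l) pf => exist _ (u y, imap q 0 l) (relabel_node_length u Hu q y l pf)
  end.

Definition lift_aut : LevAut (levS L).
Proof.
  refine (@Build_LevAut (levS L) (relabel_node (nmap a) (nmap_lh a) r)
            (relabel_node (ninv a) (ninv_lh a) ri) _ _ _ _ _ vmapS vinvS _ _).
  - intros [[y l] pf]. apply sig_ext; simpl. rewrite ninvK, imapK; auto.
  - intros [[y l] pf]. apply sig_ext; simpl. rewrite nmapK, imapK; auto.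
  - intros [[y l] pf] [[y' l'] pf']. cbn. unfold Dnext_le; simpl.
    rewrite (nmap_le a), (seq_le_imap _ r ri); auto. tauto.
  - intros [[y l] pf]. simpl. apply nmap_lh.
  - apply sig_ext; simpl. rewrite nmap_root. reflexivity.
  - intros f. apply sig_ext; simpl.
    apply functional_extensionality; intro x; apply functional_extensionality; intro n.
    unfold conj_fun. rewrite ninvK.
    destruct (proj1_sig f x n); simpl; auto. rewrite vinvK; auto.
  - intros f. apply sig_ext; simpl.
    apply functional_extensionality; intro x; apply functional_extensionality; intro n.
    unfold conj_fun. rewrite nmapK.
    destruct (proj1_sig f x n); simpl; auto. rewrite vmapK; auto.
Defined.
End LiftAut.

(** * Invariance of forcing *)

Section Tower.
Variables r ri : forall j, nat -> A j -> A j.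
Hypothesis Hri : forall j i x, ri j i (r j i x) = x.
Hypothesis Hr : forall j i x, r j i (ri j i x) = x.

Fixpoint aut (k : nat) : LevAut (lev k) :=
  match k return LevAut (lev k) with
  | 0 => base_aut (r 0) (ri 0) (Hri 0) (Hr 0)
  | S k' => lift_aut (lev k') (aut k') (r (S k')) (ri (S k')) (Hri (S k')) (Hr (S k'))
  end.

Lemma tr_nmap i (x : D i) j :
  tr i (nmap (aut i) x) j = option_map (nmap (aut j)) (tr i x j).
Proof.
  revert x j; induction i; intros x j; cbn -[Nat.eq_dec].
  - destruct (Nat.eq_dec 0 j) as [e|e]; [destruct e|]; reflexivity.
  - destruct (Nat.eq_dec (S i) j) as [e|e]; [destruct e; reflexivity|].
    destruct x as [[y l] pf]. apply IHi.
Qed.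

Lemma trd_nmap i (x : D i) j : trd i (nmap (aut i) x) j = nmap (aut j) (trd i x j).
Proof.
  unfold trd; rewrite tr_nmap.
  destruct (tr i x j); simpl; auto. symmetry; apply nmap_root.
Qed.

Lemma comp_nmap i (x : D i) j : comp i (nmap (aut i) x) j = imap (r j) 0 (comp i x j).
Proof.
  revert x j; induction i; intros x j; cbn -[Nat.eq_dec].
  - destruct (Nat.eq_dec 0 j) as [e|e]; [destruct e|]; reflexivity.
  - destruct x as [[y l] pf]. cbn -[Nat.eq_dec].
    destruct (Nat.eq_dec (S i) j) as [e|e]; [destruct e; reflexivity|]. apply IHi.
Qed.

Lemma Llast_ninv k (x : D k) :
  Llast (lev k) (ninv (aut k) x) = imap (ri k) 0 (Llast (lev k) x).
Proof. destruct k; [reflexivity|]. destruct x as [[y l] pf]; reflexivity. Qed.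

Lemma Llast_nmap k (x : D k) :
  Llast (lev k) (nmap (aut k) x) = imap (r k) 0 (Llast (lev k) x).
Proof. destruct k; [reflexivity|]. destruct x as [[y l] pf]; reflexivity. Qed.

Lemma vmap_Kc n : vmap (aut n) (Kc n) = Kc n.
Proof.
  induction n; [reflexivity|]. apply sig_ext. simpl.
  apply functional_extensionality; intro x; apply functional_extensionality; intro m.
  unfold conj_fun. simpl. rewrite IHn. reflexivity.
Qed.

Lemma vmap_Sc n f : vmap (aut n) (Sc n f) = Sc n (vmap (aut n) f).
Proof.
  induction n; [reflexivity|]. apply sig_ext. simpl.
  apply functional_extensionality; intro x; apply functional_extensionality; intro m.
  unfold conj_fun. simpl. rewrite !option_map_map.
  apply f_equal2; [|reflexivity]. apply functional_extensionality. auto.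
Qed.

Lemma ninv_id n : (forall j, j <= n -> forall i y, ri j i y = y) ->
  forall x, ninv (aut n) x = x.
Proof.
  induction n; intros H x.
  - apply imap_id. intros i y. apply (H 0); auto.
  - destruct x as [[y l] pf]. apply sig_ext. simpl. f_equal.
    + apply IHn. intros; apply H; lia.
    + apply imap_id. intros i z. apply (H (S n)); auto.
Qed.

Lemma vmap_id n : (forall j, j < n -> forall i y, ri j i y = y) ->
  forall c, vmap (aut n) c = c.
Proof.
  induction n; intros H c; [reflexivity|].
  apply sig_ext.
  change (conj_fun _ (ninv (aut n)) (vmap (aut n)) (proj1_sig c) = proj1_sig c).
  apply functional_extensionality; intro x; apply functional_extensionality; intro m.
  unfold conj_fun. rewrite (ninv_id n); [|intros; apply H; lia].
  rewrite (functional_extensionality _ _ (IHn (fun j Hj => H j (Nat.lt_lt_succ_r _ _ Hj)))).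
  destruct (proj1_sig c x m); reflexivity.
Qed.

Definition aut_env (rho : env) : env := fun n k i => vmap (aut n) (rho n k i).

Lemma aut_env_upd rho n k i c :
  aut_env (upd rho n k i c) = upd (aut_env rho) n k i (vmap (aut n) c).
Proof.
  apply functional_extensionality_dep; intro n'. apply functional_extensionality; intro k'.
  apply functional_extensionality; intro i'. unfold aut_env, upd.
  destruct (Nat.eq_dec n n') as [e|e]; [destruct e|]; auto.
  destruct (vkind_eq_dec k k'); auto. destruct (Nat.eq_dec i i'); auto.
Qed.

Lemma ev_aut s rho alpha n (Z : fn n) :
  ev s (aut_env rho) (nmap (aut (s - 1)) alpha) Z
  = option_map (vmap (aut n)) (ev s rho alpha Z).
Proof.
  induction Z; simpl.
  - reflexivity.
  - rewrite vmap_Kc; reflexivity.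
  - rewrite IHZ. destruct (ev s rho alpha Z); simpl; auto. rewrite vmap_Sc; auto.
  - rewrite IHZ1, IHZ2. destruct (ev s rho alpha Z1), (ev s rho alpha Z2); simpl; auto.
    unfold bar. simpl. rewrite trd_nmap. unfold conj_fun. rewrite ninvK. reflexivity.
  - rewrite IHZ1, IHZ2. destruct (ev s rho alpha Z1), (ev s rho alpha Z2); simpl; auto.
  - rewrite IHZ1, IHZ2. destruct (ev s rho alpha Z1), (ev s rho alpha Z2); simpl; auto.
Qed.

Lemma lawless_vmap k f : lawless k f -> lawless k (vmap (aut k) f).
Proof.
  destruct k as [|k]; [trivial|]. intros [xi [Hb Hx]].
  exists (fun n b => vmap (aut k) (xi n (ri k n b))). split.
  - intro n. destruct (Hb n) as [Hi Hs]. split.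
    + intros b1 b2 E. apply (f_equal (vinv (aut k))) in E. rewrite !vinvK in E.
      apply Hi in E. apply (f_equal (r k n)) in E. rewrite !Hr in E. exact E.
    + intro b. destruct (Hs (vinv (aut k) b)) as [a0 Ha]. exists (r k n a0).
      rewrite Hri, Ha, vmapK. reflexivity.
  - intros x n. change (option_map (vmap (aut k)) (apf f (ninv (aut k) x) n) =
      (if n <? lh x then option_map (fun b => vmap (aut k) (xi n (ri k n b)))
          (nth_error (Llast (lev k) x) n) else None)).
    rewrite Hx. unfold lh. rewrite ninv_lh, Llast_ninv, nth_error_imap. simpl.
    destruct (n <? Llh (lev k) x); auto. now rewrite !option_map_map.
Qed.

Lemma lawless_vinv k f : lawless k f -> lawless k (vinv (aut k) f).
Proof.
  destruct k as [|k]; [trivial|]. intros [xi [Hb Hx]].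
  exists (fun n b => vinv (aut k) (xi n (r k n b))). split.
  - intro n. destruct (Hb n) as [Hi Hs]. split.
    + intros b1 b2 E. apply (f_equal (vmap (aut k))) in E. rewrite !vmapK in E.
      apply Hi in E. apply (f_equal (ri k n)) in E. rewrite !Hri in E. exact E.
    + intro b. destruct (Hs (vmap (aut k) b)) as [a0 Ha]. exists (ri k n a0).
      rewrite Hr, Ha, vinvK. reflexivity.
  - intros x n. change (option_map (vinv (aut k)) (apf f (nmap (aut k) x) n) =
      (if n <? lh x then option_map (fun b => vinv (aut k) (xi n (r k n b)))
          (nth_error (Llast (lev k) x) n) else None)).
    rewrite Hx. unfold lh. rewrite nmap_lh, Llast_nmap, nth_error_imap. simpl.
    destruct (n <? Llh (lev k) x); auto. now rewrite !option_map_map.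
Qed.

Lemma dom_vmap n k c : dom n k c <-> dom n k (vmap (aut n) c).
Proof.
  destruct k; simpl.
  - tauto.
  - destruct n as [|n]; simpl; [tauto|].
    change (forall m, apf c (root n) m <> None) with (lawlike (S n) c).
    change ((forall m, apf c (root n) m <> None) <->
            (forall m, option_map (vmap (aut n)) (apf c (ninv (aut n) (root n)) m) <> None)).
    unfold root. rewrite ninv_root.
    split; intros H m; specialize (H m); rewrite ?option_map_None in *; auto.
  - split; intro H; [apply lawless_vmap; auto|].
    rewrite <- (vinvK (aut n) c). apply lawless_vinv; auto.
Qed.

Lemma bar_cover_aut s (alpha : M s) (P Q : M s -> Prop) :
  (forall beta, P beta <-> Q (nmap (aut (s - 1)) beta)) ->
  (bar_cover s alpha P <-> bar_cover s (nmap (aut (s - 1)) alpha) Q).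
Proof.
  intros HPQ. set (a := aut (s - 1)). unfold bar_cover, mpath. split.
  - intros H S HS Ha.
    destruct (H (fun z => S (nmap a z))) as [b [Hb Pb]]; auto.
    + apply (is_path_relabel _ _ (ninv a)); auto; [apply ninvK|apply nmapK|apply nmap_le].
    + exists (nmap a b). split; auto. apply HPQ; auto.
  - intros H S HS Ha.
    destruct (H (fun z => S (ninv a z))) as [b [Hb Pb]]; auto.
    + apply (is_path_relabel _ _ (nmap a)); auto; [apply nmapK|apply ninvK|apply ninv_le].
    + simpl. rewrite ninvK. auto.
    + exists (ninv a b). split; auto. apply HPQ. rewrite nmapK. auto.
Qed.

Theorem forces_aut s phi : forall rho (alpha : M s),
  forces s phi rho alpha <-> forces s phi (aut_env rho) (nmap (aut (s - 1)) alpha).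
Proof.
  set (a := aut (s - 1)).
  induction phi; intros rho alpha; simpl.
  - apply bar_cover_aut. intro beta. unfold a. rewrite !ev_aut.
    split; intros [v [H1 H2]].
    + exists (vmap (aut n) v). rewrite H1, H2. auto.
    + destruct (ev s rho beta Z) as [z|] eqn:E1; [|discriminate].
      destruct (ev s rho beta V) as [w|] eqn:E2; [|discriminate].
      simpl in H1, H2. exists z. split; auto. injection H1; injection H2; intros.
      rewrite <- (vinvK (aut n) z), <- (vinvK (aut n) w). congruence.
  - apply bar_cover_aut. intro beta. unfold a. rewrite ev_aut.
    destruct (ev s rho beta z); simpl; [|split; intros [t [Ht _]]; discriminate].
    split; intros [t [Ht [g [Hg1 [Hg2 Hg3]]]]]; injection Ht; intros <-.
    + eexists; split; [reflexivity|]. exists (nmap a g). repeat split.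
      * apply nmap_le; auto.
      * unfold lh in *. rewrite nmap_lh; auto.
      * apply (proj1 (IHphi rho g)); auto.
    + eexists; split; [reflexivity|]. exists (ninv a g). repeat split.
      * unfold nle. rewrite (nmap_le a), nmapK. auto.
      * unfold lh in *. rewrite ninv_lh; auto.
      * apply (proj2 (IHphi rho _)). unfold a. rewrite nmapK. auto.
  - tauto.
  - rewrite IHphi1, IHphi2. tauto.
  - apply bar_cover_aut. intro beta. rewrite IHphi1, IHphi2. tauto.
  - split; intros H beta Hb.
    + rewrite <- (nmapK a beta). rewrite <- IHphi1, <- IHphi2. apply H.
      unfold nle. rewrite (nmap_le a), nmapK. auto.
    + rewrite IHphi1, IHphi2. apply H. apply nmap_le; auto.
  - split; intros H c Hc.
    + rewrite <- (vmapK (aut n) c), <- aut_env_upd. apply (proj1 (IHphi _ _)).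
      apply H, (proj2 (dom_vmap _ _ _)). rewrite vmapK. auto.
    + apply (proj2 (IHphi _ _)). rewrite aut_env_upd.
      apply H, (proj1 (dom_vmap _ _ _)); auto.
  - apply bar_cover_aut. intro beta. split; intros [c [Hc H]].
    + exists (vmap (aut n) c). split; [apply (proj1 (dom_vmap _ _ _)); auto|].
      rewrite <- aut_env_upd. apply (proj1 (IHphi _ _)); auto.
    + exists (vinv (aut n) c). split; [apply (proj2 (dom_vmap _ _ _)); rewrite vmapK; auto|].
      apply (proj2 (IHphi _ _)). rewrite aut_env_upd, vmapK. auto.
Qed.

Corollary forces_transport s phi rho rho' (alpha beta : M s) :
  nmap (aut (s - 1)) alpha = beta ->
  (forall n k i, In (n, k, i) (fv phi) -> vmap (aut n) (rho n k i) = rho' n k i) ->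
  (forces s phi rho alpha <-> forces s phi rho' beta).
Proof. intros <- H. rewrite forces_aut. apply forces_agree. exact H. Qed.
End Tower.

(** * Part (1): nodes agreeing below level m *)

Section ComponentSwap.
Variables (s : nat) (alpha beta : M s).

Definition comp_swap j n (x : A j) : A j :=
  match nth_error (comp (s - 1) alpha j) n, nth_error (comp (s - 1) beta j) n with
  | Some a, Some b => swap a b x
  | _, _ => x
  end.

Lemma comp_swapK j n x : comp_swap j n (comp_swap j n x) = x.
Proof.
  unfold comp_swap.
  destruct (nth_error (comp (s - 1) alpha j) n), (nth_error (comp (s - 1) beta j) n);
    auto using swapK.
Qed.

Definition swap_aut : forall k, LevAut (lev k) :=
  aut comp_swap comp_swap comp_swapK comp_swapK.

Lemma nmap_swap_aut : lh alpha = lh beta -> nmap (swap_aut (s - 1)) alpha = beta.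
Proof.
  intro Hlh. apply node_ext. intros j Hj. unfold swap_aut. rewrite comp_nmap.
  apply nth_error_ext. intro n. rewrite nth_error_imap. simpl.
  assert (Hlen : length (comp (s - 1) alpha j) = length (comp (s - 1) beta j))
    by (rewrite !comp_length; auto).
  destruct (nth_error (comp (s - 1) alpha j) n) as [a|] eqn:Ea;
  destruct (nth_error (comp (s - 1) beta j) n) as [b|] eqn:Eb; simpl.
  - unfold comp_swap. rewrite Ea, Eb. apply f_equal, swap_left.
  - apply nth_error_None in Eb. rewrite <- Hlen, <- nth_error_None in Eb. congruence.
  - apply nth_error_None in Ea. rewrite Hlen, <- nth_error_None in Ea. congruence.
  - reflexivity.
Qed.

Lemma vmap_swap_aut m : (forall i, i < m -> comp (s - 1) alpha i = comp (s - 1) beta i) ->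
  forall n c, n <= m -> vmap (swap_aut n) c = c.
Proof.
  intros Hcomp n c Hn. apply vmap_id. intros j Hj i y. unfold comp_swap.
  rewrite (Hcomp j) by lia.
  destruct (nth_error (comp (s - 1) beta j) i); auto using swap_id.
Qed.
End ComponentSwap.

Lemma forces_comp_agree s m phi rho (alpha beta : M s) : 0 < m -> sort phi <= m ->
  (forall i, i < m -> comp (s - 1) alpha i = comp (s - 1) beta i) ->
  (forces s phi rho alpha <-> forces s phi rho beta).
Proof.
  intros Hm Hsort Hcomp.
  assert (Hlh : lh alpha = lh beta).
  { rewrite <- (comp_length (s - 1) alpha 0), <- (comp_length (s - 1) beta 0) by lia.
    rewrite Hcomp; auto. }
  apply (forces_transport _ _ (comp_swapK s alpha beta) (comp_swapK s alpha beta));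
    [apply nmap_swap_aut; auto|].
  intros n k i Hin. apply (vmap_swap_aut s alpha beta m Hcomp).
  apply (vtype_le_sort phi (n, k, i)) in Hin. unfold vtype in Hin; simpl in Hin. lia.
Qed.

(** * Part (2): lawless functionals agreeing at a node *)

Definition at_level (q : nat) (f : nat -> A q -> A q) (j : nat) : nat -> A j -> A j :=
  match Nat.eq_dec q j with
  | left e => eq_rect q (fun j => nat -> A j -> A j) f j e
  | right _ => fun _ x => x
  end.

Lemma at_level_eq q f : at_level q f q = f.
Proof.
  unfold at_level. destruct (Nat.eq_dec q q) as [e|e]; [|contradiction].
  rewrite (UIP_refl_nat _ e). reflexivity.
Qed.

Lemma at_level_neq q f j : q <> j -> forall i x, at_level q f j i x = x.
Proof. intros H i x. unfold at_level. destruct (Nat.eq_dec q j); [contradiction|reflexivity]. Qed.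

Lemma at_levelK q f g : (forall i x, g i (f i x) = x) ->
  forall j i x, at_level q g j i (at_level q f j i x) = x.
Proof.
  intros H j i x. unfold at_level.
  destruct (Nat.eq_dec q j) as [e|e]; [destruct e; apply H|reflexivity].
Qed.

Lemma apf_bar_lawless s q (alpha : M s) (f : A (S q)) (xi : nat -> A q -> A q) :
  S q <= s ->
  (forall (x : D q) n, apf f x n =
     if n <? lh x then option_map (xi n) (nth_error (Llast (lev q) x) n) else None) ->
  forall n, apf f (bar s alpha (S q)) n =
    if n <? lh alpha then option_map (xi n) (nth_error (comp (s - 1) alpha q) n) else None.
Proof.
  intros Hq Ef n. rewrite Ef. unfold bar, trd; simpl.
  destruct (tr_some (s - 1) alpha q ltac:(lia)) as [y [-> [-> ->]]]. reflexivity.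
Qed.

Section LawlessTransfer.
Variables (q : nat) (xg xh : nat -> A q -> A q).
Hypothesis Bg : forall n, bijective (xg n).
Hypothesis Bh : forall n, bijective (xh n).

Definition transfer n (a : A q) : A q := bij_inv (xh n) (Bh n) (xg n a).
Definition transfer_inv n (b : A q) : A q := bij_inv (xg n) (Bg n) (xh n b).

Lemma transferK : forall j i x,
  at_level q transfer_inv j i (at_level q transfer j i x) = x.
Proof.
  apply at_levelK. intros n a. unfold transfer, transfer_inv. now rewrite bij_invK, bijK.
Qed.

Lemma transfer_invK : forall j i x,
  at_level q transfer j i (at_level q transfer_inv j i x) = x.
Proof.
  apply at_levelK. intros n b. unfold transfer, transfer_inv. now rewrite bij_invK, bijK.
Qed.

Definition transfer_aut : forall k, LevAut (lev k) :=
  aut (at_level q transfer) (at_level q transfer_inv) transferK transfer_invK.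

Lemma vmap_transfer_low n c : n <= q -> vmap (transfer_aut n) c = c.
Proof. intro Hn. apply vmap_id. intros j Hj i y. apply at_level_neq. lia. Qed.

Lemma vmap_transfer_lawless (g h : A (S q)) :
  (forall (x : D q) n, apf g x n =
     if n <? lh x then option_map (xg n) (nth_error (Llast (lev q) x) n) else None) ->
  (forall (x : D q) n, apf h x n =
     if n <? lh x then option_map (xh n) (nth_error (Llast (lev q) x) n) else None) ->
  vmap (transfer_aut (S q)) g = h.
Proof.
  intros Eg Eh. apply sig_ext.
  change (conj_fun _ (ninv (transfer_aut q)) (vmap (transfer_aut q)) (proj1_sig g)
          = proj1_sig h).
  apply functional_extensionality; intro x; apply functional_extensionality; intro n.
  unfold conj_fun. rewrite (functional_extensionality _ _ (fun c => vmap_transfer_low q c (le_n q))).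
  change (option_map (fun c => c) (apf g (ninv (transfer_aut q) x) n) = apf h x n).
  rewrite Eg, Eh. unfold lh. rewrite ninv_lh. unfold transfer_aut.
  rewrite Llast_ninv, at_level_eq, nth_error_imap.
  destruct (n <? Llh (lev q) x); auto. rewrite !option_map_map. simpl.
  apply f_equal2; [|reflexivity]. apply functional_extensionality; intro b.
  unfold transfer_inv. apply bij_invK.
Qed.

Lemma vmap_transfer_lawlike f : lawlike (S q) f -> vmap (transfer_aut (S q)) f = f.
Proof.
  intro Hf. apply sig_ext.
  change (conj_fun _ (ninv (transfer_aut q)) (vmap (transfer_aut q)) (proj1_sig f)
          = proj1_sig f).
  apply functional_extensionality; intro x; apply functional_extensionality; intro n.
  unfold conj_fun. rewrite (functional_extensionality _ _ (fun c => vmap_transfer_low q c (le_n q))).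
  change (option_map (fun c => c) (apf f (ninv (transfer_aut q) x) n) = apf f x n).
  specialize (Hf n). destruct (apf f (root q) n) as [v|] eqn:E; [|contradiction].
  pose proof (proj1 (proj2_sig f)) as Hmono.
  assert (E1 : apf f x n = Some v) by exact (Hmono _ _ (nle_root q x) n v E).
  assert (E2 : apf f (ninv (transfer_aut q) x) n = Some v)
    by exact (Hmono _ _ (nle_root q _) n v E).
  now rewrite E1, E2.
Qed.

Lemma nmap_transfer_fixed s (alpha : M s) : q <= s - 1 ->
  (forall n a, nth_error (comp (s - 1) alpha q) n = Some a -> xg n a = xh n a) ->
  nmap (transfer_aut (s - 1)) alpha = alpha.
Proof.
  intros Hq Hagree. apply node_ext. intros j Hj. unfold transfer_aut. rewrite comp_nmap.
  destruct (Nat.eq_dec q j) as [<-|e].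
  - rewrite at_level_eq. apply nth_error_ext. intro n. rewrite nth_error_imap. simpl.
    destruct (nth_error (comp (s - 1) alpha q) n) as [a|] eqn:Ea; auto. simpl.
    unfold transfer. rewrite (Hagree n a Ea). apply f_equal, bijK.
  - apply imap_id. intros i x. apply at_level_neq; auto.
Qed.
End LawlessTransfer.

Lemma forces_lawless_agree s q hi phi rho (alpha : M s) (g h : A (S q)) :
  good_env rho -> S q <= s -> sort phi <= S q ->
  (forall v, In v (fv phi) -> vtype v = S q -> snd (fst v) <> Law ->
     v = (S q, Lless, hi)) ->
  lawless (S q) g -> lawless (S q) h ->
  (forall n, n < lh alpha -> apf g (bar s alpha (S q)) n = apf h (bar s alpha (S q)) n) ->
  (forces s phi (upd rho (S q) Lless hi g) alpha <->
   forces s phi (upd rho (S q) Lless hi h) alpha).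
Proof.
  intros Hgood Hq Hsort Hfv [xg [Bg Eg]] [xh [Bh Eh]] Hagree.
  apply (forces_transport _ _ (transferK q xg xh Bg Bh) (transfer_invK q xg xh Bg Bh)).
  - apply nmap_transfer_fixed; [lia|]. intros n a Ha.
    assert (Hn : n < lh alpha).
    { rewrite <- (comp_length (s - 1) alpha q) by lia.
      apply nth_error_Some. congruence. }
    specialize (Hagree n Hn).
    rewrite (apf_bar_lawless s q alpha g xg Hq Eg), (apf_bar_lawless s q alpha h xh Hq Eh),
      Ha in Hagree.
    apply Nat.ltb_lt in Hn. rewrite Hn in Hagree. injection Hagree. auto.
  - intros n k i Hin.
    change (vmap (transfer_aut q xg xh Bg Bh n) (upd rho (S q) Lless hi g n k i)
            = upd rho (S q) Lless hi h n k i).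
    pose proof (vtype_le_sort phi (n, k, i) Hin) as Hn. unfold vtype in Hn; simpl in Hn.
    destruct (Nat.le_gt_cases n q) as [Hle|Hlt].
    + rewrite vmap_transfer_low by exact Hle.
      rewrite !upd_other; auto; intro E; injection E; lia.
    + assert (n = S q) by lia. subst n.
      destruct k.
      * discriminate (Hfv _ Hin eq_refl ltac:(discriminate)).
      * rewrite !upd_other by discriminate.
        apply vmap_transfer_lawlike, (Hgood (S q) Law i).
      * injection (Hfv _ Hin eq_refl ltac:(discriminate)) as ->.
        rewrite !upd_same. apply vmap_transfer_lawless; auto.
Qed.

Theorem lemma7p3 :
  forall (s : nat), 1 <= s ->
  forall (rho : env), good_env rho ->
  (* (1) *)
  (forall (m : nat), 1 <= m ->
   forall (phi : form), LPs_form s phi -> sort phi <= m ->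
   forall (alpha beta : M s),
     (forall i, i < m -> comp (s - 1) alpha i = comp (s - 1) beta i) ->
     (forces s phi rho alpha <-> forces s phi rho beta))
  /\
  (* (2) : p = S q, the variable \mathcal H^p is (p, Lless, hi) *)
  (forall (q : nat), S q <= s ->
   forall (hi : nat) (phi : form), LPs_form s phi -> sort phi <= S q ->
   (forall v, In v (fv phi) -> vtype v = S q -> snd (fst v) <> Law ->
      v = (S q, Lless, hi)) ->
   forall (alpha : M s) (g h : A (S q)),
     lawless (S q) g -> lawless (S q) h ->
     (forall n, n < lh alpha -> apf g (bar s alpha (S q)) n = apf h (bar s alpha (S q)) n) ->
     (forces s phi (upd rho (S q) Lless hi g) alpha <->
      forces s phi (upd rho (S q) Lless hi h) alpha)).
Proof.
  intros s _ rho Hgood. split.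
  - intros m Hm phi _ Hsort alpha beta Hcomp.
    exact (forces_comp_agree s m phi rho alpha beta Hm Hsort Hcomp).
  - intros q Hq hi phi _ Hsort Hfv alpha g h Hg Hh Hagree.
    exact (forces_lawless_agree s q hi phi rho alpha g h Hgood Hq Hsort Hfv Hg Hh Hagree).
Qed.
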